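(* Let $n\ge 2$, let $\lambda_1\ge\lambda_2\ge\dots\ge\lambda_n$ be real numbers, and let $w_1,\dots,w_n$ be non-negative real numbers with $\sum_{i=1}^n w_i=1$. Let $\mu_1\ge\dots\ge\mu_{n-1}$ be the roots (which are all real) of the degree-$(n-1)$ polynomial $$p(x)=\sum_{i=1}^n w_i\prod_{j\ne i}(x-\lambda_j).$$ Set $U_\ell:=\sum_{i=\ell}^n w_i$ and $L_{r+1}:=\sum_{i=1}^{r+1}w_i$. Then for all integers $1\le \ell\le r\le n-1$ such that $U_\ell\neq 0$ and $L_{r+1}\neq 0$, $$\sum_{j=\ell}^r\lambda_{j+1}+\sum_{j=\ell}^r\frac{w_{j+1}}{L_{r+1}}(\lambda_\ell-\lambda_{j+1})\;\le\;\sum_{j=\ell}^r\mu_j\;\le\;\sum_{j=\ell}^r\lambda_j-\sum_{j=\ell}^r\frac{w_j}{U_\ell}(\lambda_j-\lambda_{r+1}).$$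
   Context: Roots are counted with multiplicity and listed in non-increasing order. *)

(* Indices are 1-based: lam, w, mu : nat -> R, only the
   values at 1..n (resp. 1..n-1) matter. *)
From mathcomp Require Import all_boot all_order all_algebra.
Set Implicit Arguments. Unset Strict Implicit. Unset Printing Implicit Defensive.
Import Order.TTheory GRing.Theory Num.Theory.
Local Open Scope ring_scope.

Definition interlace_poly (R : nzRingType) (n : nat) (lam w : nat -> R) : {poly R} :=
  \sum_(1 <= i < n.+1)
     w i *: \prod_(1 <= j < n.+1 | j != i) ('X - (lam j)%:P).

(* Write p = \sum_i w_i \prod_(j != i) (X - lam_j) as \prod_j (X - lam_j) * f
   with f(t) = \sum_i w_i / (t - lam_i).  The roots of p interlace with the
   poles lam_i, and off the poles the sign of f(t) tells whether p has as many
   roots above t as there are poles above t, or one fewer.  Hence if f_1 <= f_2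
   on a gap (lam_(c+1), lam_c), the root of p_1 in that gap lies below the root
   of p_2 there.
   For the upper bound keep only the poles lam_l, ..., lam_(r+1) and move all
   the weight beyond r onto lam_(r+1): on the gaps with l <= c <= r this can
   only increase f, so the r - l + 1 roots of the new polynomial dominate
   mu_l, ..., mu_r one by one, and their sum is read off its second
   coefficient.  The lower bound is symmetric: keep lam_l, ..., lam_(r+1) and
   move all the weight up to l onto lam_l. *)

From mathcomp Require Import all_boot all_order all_algebra.
From mathcomp Require Import reals.
From mathcomp Require Import ring zify.
Set Implicit Arguments. Unset Strict Implicit. Unset Printing Implicit Defensive.
Import Order.TTheory GRing.Theory Num.Theory.
Local Open Scope ring_scope.

Lemma sub_in_count (T : eqType) (a1 a2 : pred T) s :
  {in s, forall x, a1 x -> a2 x} -> (count a1 s <= count a2 s)%N.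
Proof.
elim: s => [//|x s IH] s12 /=; rewrite leq_add ?IH //.
  by case: (boolP (a1 x)) => // /(s12 x (mem_head _ _)) ->.
by move=> y ys; apply: s12; rewrite inE ys orbT.
Qed.

Lemma perm_eq_map_dup (T T' : eqType) (f : T -> T') s : ~~ uniq (map f s) ->
  exists x y r, perm_eq s [:: x, y & r] /\ f x = f y.
Proof.
elim: s => [//|z s IH] /=; rewrite negb_and negbK => /orP[/mapP[y ys zy]|/IH].
  by exists z, y, (rem y s); rewrite perm_cons perm_to_rem.
move=> [x [y [r [sr xy]]]]; exists x, y, (z :: r); split => //.
apply: (perm_trans (y := [:: z, x, y & r])); first by rewrite perm_cons.
by rewrite -[[:: z, x, y & r]]/([:: z] ++ [:: x; y] ++ r) perm_catCA.
Qed.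

Lemma count_iota_prefix (P : pred nat) b k m : (k <= m)%N ->
  (forall i, (b <= i < b + m)%N -> P i = (i < b + k)%N) -> count P (iota b m) = k.
Proof.
move=> km Pi; rewrite (eq_in_count (a2 := fun i => (i < b + k)%N)); last first.
  by move=> i; rewrite mem_iota => /Pi.
rewrite -(subnKC km) iotaD count_cat (eq_in_count (a2 := predT)) ?count_predT ?size_iota.
  rewrite (eq_in_count (a2 := pred0)) ?count_pred0 ?addn0 // => i.
  by rewrite mem_iota => /andP[+ _]; rewrite leqNgt => /negbTE.
by move=> i; rewrite mem_iota => /andP[_ ->].
Qed.

Lemma exists_seq_nth (T : Type) (x0 : T) (P : nat -> T -> Prop) m :
  (forall k, (k < m)%N -> exists x, P k x) ->
  exists s : seq T, size s = m /\ forall k, (k < m)%N -> P k (nth x0 s k).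
Proof.
elim: m => [|m IH] hP; first by exists [::].
have [s [szs Ps]] := IH (fun k km => hP k (ltnW km)).
have [x Px] := hP m (ltnSn m).
exists (rcons s x); rewrite size_rcons szs; split => // k.
rewrite ltnS leq_eqVlt nth_rcons szs.
by case/orP => [/eqP ->|km]; [rewrite ltnn eqxx | rewrite km; apply: Ps].
Qed.

Section WeightedPoles.
Variable R : rcfType.
Implicit Types (d e : seq (R * R)) (s : seq R) (t : R).

Definition poles d := map fst d.
Definition wsum d := \sum_(x <- d) x.2.

(* For [d = [:: (a_1, w_1); ...; (a_n, w_n)]] this is
   [\sum_i w_i \prod_(j != i) ('X - a_j)]. *)
Fixpoint wpoly d : {poly R} :=
  if d is x :: d' then
    ('X - x.1%:P) * wpoly d' + x.2 *: \prod_(z <- poles d') ('X - z%:P)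
  else 0.

Definition wfrac d t := \sum_(x <- d) x.2 / (t - x.1).

Definition count_gt t s := count (fun x => t < x) s.
Definition count_ge t s := count (fun x => t <= x) s.

Lemma wpoly_cons x d :
  wpoly (x :: d) = ('X - x.1%:P) * wpoly d + x.2 *: \prod_(z <- poles d) ('X - z%:P).
Proof. by []. Qed.

Lemma wpoly_swap x y d : wpoly [:: x, y & d] = wpoly [:: y, x & d].
Proof.
rewrite /= /poles /= !big_cons -!mul_polyC.
set Q := \prod_(_ <- _) _; ring.
Qed.

Lemma wpoly_rem x d : x \in d -> wpoly d = wpoly (x :: rem x d).
Proof.
elim: d => [//|y d IH]; rewrite inE /=.
have [-> //|nxy xd] := eqVneq x y.
have pd : perm_eq (poles d) (poles (x :: rem x d)) by apply/perm_map/perm_to_rem.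
transitivity (wpoly [:: y, x & rem x d]); last exact: wpoly_swap.
by rewrite [RHS]wpoly_cons -IH // (perm_big _ pd).
Qed.

Lemma wpoly_perm d e : perm_eq d e -> wpoly d = wpoly e.
Proof.
elim: d e => [|x d IH] e pde; first by move: (perm_size pde); case: e pde.
have xe : x \in e by rewrite -(perm_mem pde) mem_head.
have pde' : perm_eq d (rem x e).
  by rewrite -(perm_cons x) (perm_trans pde) // perm_to_rem.
by rewrite (wpoly_rem xe) /= (IH _ pde') (perm_big _ (perm_map fst pde')).
Qed.

Lemma wsum_perm d e : perm_eq d e -> wsum d = wsum e.
Proof. exact: perm_big. Qed.

Lemma horner_wpoly d t : t \notin poles d ->
  (wpoly d).[t] = (\prod_(z <- poles d) (t - z)) * wfrac d t.
Proof.
elim: d => [|x d IH]; first by rewrite /= horner0 /wfrac !big_nil mulr0.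
rewrite /= inE negb_or => /andP[tx td].
rewrite hornerD hornerM hornerZ hornerXsubC horner_prod.
under eq_bigr => i _ do rewrite hornerXsubC.
rewrite IH // /wfrac big_cons big_cons -/(wfrac d t).
have : t - x.1 != 0 by rewrite subr_eq0.
by set Q := \prod_(_ <- _) _; move=> ?; field.
Qed.

Lemma prod_sub_sign t s : t \notin s ->
  0 < (-1) ^+ count_gt t s * \prod_(z <- s) (t - z).
Proof.
elim: s => [|z s IH]; first by rewrite big_nil mulr1.
rewrite inE negb_or => /andP[tz /IH]; rewrite big_cons /count_gt /=.
set c := count _ s; set Q := \prod_(_ <- s) _ => IHs.
have [zt|tz'] := ltP t z.
  have -> : (-1) ^+ (true + c) * ((t - z) * Q) = (z - t) * ((-1) ^+ c * Q).
    by rewrite add1n exprS; ring.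
  by rewrite mulr_gt0 // subr_gt0.
by rewrite add0n mulrCA mulr_gt0 // subr_gt0 lt_neqAle tz' eq_sym tz.
Qed.

Lemma wpoly_top_coef d : (size (wpoly d) <= size d)%N /\ (wpoly d)`_(size d).-1 = wsum d.
Proof.
elim: d => [|x d [IH1 IH2]]; first by rewrite /= size_poly0 coef0 /wsum big_nil.
set P := \prod_(z <- poles d) ('X - z%:P).
have sP : size P = (size d).+1 by rewrite size_prod_XsubC size_map.
have lP : P`_(size d) = 1.
  by have := monicP (monic_prod_XsubC (poles d) xpredT id); rewrite lead_coefE sP.
split.
  rewrite /= (leq_trans (size_add _ _)) // geq_max (leq_trans (size_scale_leq _ _)).
    by rewrite (leq_trans (size_polyMleq _ _)) // size_XsubC; case: size IH1.
  by rewrite sP.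
rewrite /= coefD coefZ lP mulr1 mulrBl coefB coefXM coefCM (nth_default 0 IH1).
rewrite mulr0 subr0 /wsum big_cons addrC; congr (_ + _).
by case: eqP => [/size0nil ->|_]; [rewrite big_nil | exact: IH2].
Qed.

Lemma wpoly_subtop_coef d : (2 <= size d)%N ->
  (wpoly d)`_(size d).-2 = - (wsum d * \sum_(z <- poles d) z - \sum_(x <- d) x.2 * x.1).
Proof.
elim: d => [//|x d IH] d2; have [_ lead] := wpoly_top_coef d.
have subtop : (\prod_(z <- poles d) ('X - z%:P))`_(size d).-1 = - \sum_(z <- poles d) z.
  by rewrite -(size_map fst) coefPn_prod_XsubC // size_map; case: (d) d2.
rewrite /= coefD coefZ mulrBl coefB coefXM coefCM lead subtop.
rewrite /wsum /poles /= !big_cons -/(wsum d) -/(poles d).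
case: d IH d2 {lead subtop} => [//|y [|z d]] IH d2.
  by rewrite /= /wsum !big_cons !big_nil /=; ring.
by rewrite /= IH //= /wsum /poles /= !big_cons; ring.
Qed.

(* The counting conditions say that [mu] interlaces with the poles of [d]. *)
Definition interlacing d mu := [/\ size mu = (size d).-1,
  wpoly d = wsum d *: \prod_(z <- mu) ('X - z%:P) &
  forall t, (count_ge t mu <= count_ge t (poles d))%N /\
            (count_gt t (poles d) <= (count_gt t mu).+1)%N].

Lemma count_gt_le_ge t s : (count_gt t s <= count_ge t s)%N.
Proof. by apply: sub_count => x /ltW. Qed.

Lemma count_gt_lt_ge t s : t \in s -> (count_gt t s < count_ge t s)%N.
Proof.
elim: s => [//|z s IH]; rewrite inE /count_gt /count_ge /=.
case/orP=> [/eqP <-|ts]; first by rewrite ltxx lexx ltnS count_gt_le_ge.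
by rewrite -addnS leq_add ?IH //; case: ltP => // /ltW ->.
Qed.

Lemma count_ge_notin t s : t \notin s -> count_ge t s = count_gt t s.
Proof.
move=> ts; apply: eq_in_count => x xs /=.
by rewrite le_eqVlt; case: eqP => // tx; rewrite tx xs in ts.
Qed.

(* Both factorizations of [wpoly d] give its sign at [t]: one through the
   roots above [t], the other through the poles above [t] and [wfrac d t]. *)
Lemma interlacing_count_gt d mu t : 0 < wsum d -> interlacing d mu -> t \notin poles d ->
  [/\ (count_gt t mu <= count_gt t (poles d))%N,
      (count_gt t (poles d) <= (count_gt t mu).+1)%N &
      (0 < wfrac d t) = (count_gt t mu == count_gt t (poles d))].
Proof.
move=> wd0 [_ dmu cnt] td; have [ge_cnt gt_cnt] := cnt t.
have NK : (count_gt t mu <= count_gt t (poles d))%N.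
  by rewrite -(count_ge_notin td) (leq_trans (count_gt_le_ge _ _)).
split => //.
have E : wsum d * \prod_(z <- mu) (t - z) = \prod_(z <- poles d) (t - z) * wfrac d t.
  rewrite -horner_wpoly // {1}dmu hornerZ horner_prod; congr (_ * _).
  by apply: eq_bigr => i _; rewrite hornerXsubC.
set Pm := \prod_(_ <- mu) _ in E; set Pl := \prod_(_ <- poles d) _ in E.
have sPl := prod_sub_sign td; rewrite -/Pl in sPl.
have [tmu|tmu] := boolP (t \in mu).
  have Pm0 : Pm = 0.
    by apply/eqP; rewrite prodf_seq_eq0; apply/hasP; exists t => //=; rewrite subrr.
  have Pl0 : Pl != 0 by apply: contraTneq sPl => ->; rewrite mulr0 ltxx.
  have -> : wfrac d t = 0.
    by apply/eqP; move: E; rewrite Pm0 mulr0 => /esym/eqP; rewrite mulf_eq0 (negbTE Pl0).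
  rewrite ltxx; apply/esym/negbTE; rewrite neq_ltn (leq_trans (count_gt_lt_ge tmu)) //.
  by rewrite (leq_trans ge_cnt) // count_ge_notin.
have sPm := prod_sub_sign tmu; rewrite -/Pm in sPm.
set N := count_gt t mu in NK gt_cnt sPm *; set K := count_gt t (poles d) in NK gt_cnt sPl *.
have eqB : (-1) ^+ K * Pl * wfrac d t = wsum d * ((-1) ^+ K * Pm).
  by rewrite -mulrA -E mulrCA.
have [NKlt|KN|eNK] := ltngtP N K; last 2 first.
- by rewrite ltnNge NK in KN.
- by rewrite -(pmulr_rgt0 _ sPl) eqB -eNK mulr_gt0.
have KN : K = N.+1 by apply/eqP; rewrite eqn_leq gt_cnt NKlt.
move: eqB sPl; rewrite KN exprS !mulN1r !mulNr mulrN => /eqP; rewrite eqr_opp => /eqP eqB.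
rewrite oppr_gt0 => sPl; apply/negbTE; rewrite -leNgt.
have : 0 < (-1) ^+ N * Pl * wfrac d t by rewrite eqB mulr_gt0.
by rewrite nmulr_rgt0 // => /ltW.
Qed.

Lemma wfrac_le_count_gt d e mu nu t :
  0 < wsum d -> 0 < wsum e -> interlacing d mu -> interlacing e nu ->
  t \notin poles d -> t \notin poles e -> wfrac d t <= wfrac e t ->
  (count_gt t mu + count_gt t (poles e) <= count_gt t nu + count_gt t (poles d))%N.
Proof.
move=> wd0 we0 dmu enu td te de.
have [d1 d2 d3] := interlacing_count_gt wd0 dmu td.
have [e1 e2 e3] := interlacing_count_gt we0 enu te.
have [/eqP E|NE] := boolP (count_gt t mu == count_gt t (poles d)).
  have : 0 < wfrac e t by apply: lt_le_trans de; rewrite d3 E.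
  by rewrite e3 => /eqP ->; rewrite E addnC.
have -> : count_gt t (poles d) = (count_gt t mu).+1.
  by apply/eqP; rewrite eqn_leq d2 ltn_neqAle NE d1.
by rewrite addnS -addSn addnC leq_add2r.
Qed.

Lemma interlacing_perm d e mu : perm_eq d e -> interlacing d mu -> interlacing e mu.
Proof.
move=> de [szmu dmu cnt]; have /permP pde := perm_map fst de.
split; first by rewrite szmu (perm_size de).
  by rewrite -(wpoly_perm de) -(wsum_perm de).
by move=> t; rewrite /count_ge /count_gt -!pde; exact: cnt.
Qed.

Lemma interlacing_perm_roots d mu nu : perm_eq mu nu -> interlacing d mu -> interlacing d nu.
Proof.
move=> /[dup] mn /permP pmn [szmu dmu cnt]; split; first by rewrite -(perm_size mn).
  by rewrite -(perm_big _ mn).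
by move=> t; rewrite /count_ge /count_gt -!pmn; exact: cnt.
Qed.

Lemma horner_wpoly_pole d x : x \in d ->
  (wpoly d).[x.1] = x.2 * \prod_(z <- poles (rem x d)) (x.1 - z).
Proof.
move=> xd; rewrite (wpoly_rem xd) wpoly_cons hornerD hornerM hornerXsubC subrr.
rewrite mul0r add0r hornerZ horner_prod; congr (_ * _).
by apply: eq_bigr => i _; rewrite hornerXsubC.
Qed.

Lemma wpoly_sign_pole d x : uniq (poles d) -> x \in d -> 0 < x.2 ->
  0 < (-1) ^+ count_gt x.1 (poles d) * (wpoly d).[x.1].
Proof.
move=> ud xd x0; rewrite horner_wpoly_pole //.
have pd : perm_eq (poles d) (x.1 :: poles (rem x d)).
  exact: (perm_map fst (perm_to_rem xd)).
have xnd : x.1 \notin poles (rem x d) by move: ud; rewrite (perm_uniq pd) => /andP[].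
rewrite /count_gt (permP pd) /= ltxx add0n mulrCA mulr_gt0 //.
exact: prod_sub_sign.
Qed.

Lemma alternating_poly_roots (p : {poly R}) (a : nat -> R) m :
  (size p <= m.+1)%N -> (forall k, (k < m)%N -> a k.+1 < a k) ->
  (forall k, (k <= m)%N -> 0 < (-1) ^+ k * p.[a k]) ->
  exists mu : seq R, [/\ size mu = m, p = lead_coef p *: \prod_(z <- mu) ('X - z%:P)
    & forall k, (k < m)%N -> a k.+1 < nth 0 mu k < a k].
Proof.
move=> szp adec asgn.
have gap_root k : (k < m)%N -> exists x, (a k.+1 < x < a k) && root p x.
  move=> km; pose q := (-1) ^+ k *: p.
  have q1 : q.[a k.+1] < 0.
    by have := asgn _ km; rewrite exprS mulN1r mulNr oppr_gt0 /q hornerZ.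
  have q0 : 0 < q.[a k] by rewrite /q hornerZ asgn // ltnW.
  have [|x /andP[x1 x2] rx] := @poly_ivt R q _ _ (ltW (adec _ km)).
    by rewrite (ltW q1) (ltW q0).
  exists x; have -> : root p x by move: rx; rewrite !rootE /q hornerZ mulf_eq0 signr_eq0.
  rewrite andbT !lt_neqAle x1 x2 !andbT.
  apply/andP; split; [apply: contraTneq rx => <- | apply: contraTneq rx => ->].
    by rewrite rootE lt_eqF.
  by rewrite rootE gt_eqF.
have [mu [szmu mu_gap]] := exists_seq_nth 0 gap_root.
have gtmu : sorted >%R mu.
  apply/(sortedP 0) => k; rewrite szmu => km.
  have /andP[/andP[_ lt1] _] := mu_gap _ km.
  have /andP[/andP[lt2 _] _] := mu_gap _ (ltnW km).
  exact: lt_trans lt1 lt2.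
have umu : uniq mu.
  apply: (sorted_uniq _ _ gtmu) => [y x z /= yx zy|x /=]; last exact: ltxx.
  exact: lt_trans zy yx.
have rmu : all (root p) mu.
  by apply/(all_nthP 0) => k; rewrite szmu => /mu_gap /andP[].
have p0 : p != 0.
  by apply: contraTneq (asgn _ (leq0n m)) => ->; rewrite horner0 mulr0 ltxx.
have szp' : size p = (size mu).+1.
  by apply/eqP; rewrite eqn_leq szmu szp -szmu max_poly_roots.
exists mu; split => //; first by apply: all_roots_prod_XsubC; rewrite ?uniq_rootsE.
by move=> k /mu_gap /andP[].
Qed.

Lemma interlacing_count_of_gaps (a : nat -> R) m mu : size mu = m ->
  (forall k, (k < m)%N -> a k.+1 < nth 0 mu k < a k) ->
  forall t, (count_ge t mu <= count_ge t (mkseq a m.+1))%N /\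
            (count_gt t (mkseq a m.+1) <= (count_gt t mu).+1)%N.
Proof.
move=> szmu mu_gap t; have -> : mu = mkseq (nth 0 mu) m by rewrite -szmu mkseq_nth.
rewrite /count_ge /count_gt /mkseq !count_map; split.
  rewrite -addn1 iotaD count_cat (leq_trans _ (leq_addr _ _)) //.
  apply: sub_in_count => k; rewrite mem_iota /= => km /le_trans; apply.
  by have /andP[_ /ltW] := mu_gap _ km.
rewrite /= -[iota 1 m]/(iota (1 + 0) m) iotaDl count_map.
rewrite -[X in (_ <= X)%N]add1n leq_add ?leq_b1 //.
apply: sub_in_count => k; rewrite mem_iota /= => km /lt_trans; apply.
by have /andP[] := mu_gap _ km.
Qed.

Lemma count_gt_decr (a : nat -> R) m k : (forall i, (i < m)%N -> a i.+1 < a i) ->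
  (k <= m)%N -> count_gt (a k) (mkseq a m.+1) = k.
Proof.
move=> adec km.
have decr : {in [pred i | (i <= m)%N] &, {homo a : i j / (i < j)%N >-> j < i}}.
  apply: (homo_ltn_in (r := fun x y => y < x)).
  - by move=> y x z xy yz; exact: lt_trans yz xy.
  - by move=> i j _ jm l /andP[_ /ltnW lj]; rewrite inE (leq_trans lj).
  - by move=> i _ /adec.
rewrite /count_gt /mkseq count_map; apply: count_iota_prefix => [|i]; first exact: ltnW.
rewrite !add0n ltnS /= => im; have [ik|] := ltnP i k; first by rewrite decr.
rewrite leq_eqVlt => /orP[/eqP ->|ki]; first by rewrite ltxx.
by apply/negbTE; rewrite -leNgt ltW // decr.
Qed.

Lemma wsum_gt0 d : (0 < size d)%N -> (forall x, x \in d -> 0 < x.2) -> 0 < wsum d.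
Proof.
case: d => [//|x d] _ dpos; rewrite /wsum big_cons ltr_pwDl ?dpos ?mem_head //.
by rewrite big_seq sumr_ge0 // => y yd; rewrite ltW // dpos // inE yd orbT.
Qed.

Lemma interlacing_exists_uniq d : (0 < size d)%N -> uniq (poles d) ->
  (forall x, x \in d -> 0 < x.2) -> exists mu, interlacing d mu.
Proof.
move=> d0 ud dpos; pose ge1 (x y : R * R) := y.1 <= x.1.
have de : perm_eq d (sort ge1 d) by rewrite perm_sym perm_sort.
suff [mu emu] : exists mu, interlacing (sort ge1 d) mu.
  by exists mu; apply: interlacing_perm emu; rewrite perm_sym.
move: (sort ge1 d) (sort_sorted (fun x y => le_total y.1 x.1) d) de => e srt de.
have ue : uniq (poles e) by rewrite -(perm_uniq (perm_map fst de)).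
have epos x : x \in e -> 0 < x.2 by rewrite -(perm_mem de); apply: dpos.
have [m sze] : exists m, size e = m.+1.
  by rewrite -(perm_size de); case: (size d) d0 => // m; exists m.
pose a k := (nth (0, 0) e k).1.
have pe : poles e = mkseq a m.+1.
  by rewrite /poles -{1}(mkseq_nth (0, 0) e) sze /mkseq -map_comp.
have adec k : (k < m)%N -> a k.+1 < a k.
  move=> km; have ge1_trans : transitive ge1 by move=> x y z yx zy; exact: le_trans zy yx.
  have neq : a k != a k.+1.
    have := @nth_uniq _ 0 (poles e) k k.+1.
    rewrite pe size_mkseq !nth_mkseq ?ltnS ?(ltnW km) //.
    by rewrite -pe ue (ltn_eqF (ltnSn k)) => /(_ isT km isT) /negbT.
  rewrite lt_def neq /=.
  by apply: (sorted_ltn_nth ge1_trans (0, 0) srt k k.+1); rewrite ?inE ?sze ?ltnS ?(ltnW km).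
have sgn k : (k <= m)%N -> 0 < (-1) ^+ k * (wpoly e).[a k].
  move=> km; have xe : nth (0, 0) e k \in e by rewrite mem_nth // sze.
  by have := wpoly_sign_pole ue xe (epos _ xe); rewrite -/(a k) pe count_gt_decr.
have [szp lead] := wpoly_top_coef e; rewrite sze /= in szp lead.
have [mu [szmu emu mu_gap]] := alternating_poly_roots szp adec sgn.
have we0 : 0 < wsum e by rewrite wsum_gt0 ?sze.
have szp' : size (wpoly e) = m.+1.
  apply/eqP; rewrite eqn_leq szp ltnNge; apply: contraTN we0 => /(nth_default 0).
  by rewrite lead => ->; rewrite ltxx.
exists mu; split; first by rewrite szmu sze.
  by rewrite {1}emu lead_coefE szp' lead.
by move=> t; rewrite pe; exact: interlacing_count_of_gaps.
Qed.

Lemma interlacing_cons a d e mu : (0 < size d)%N -> interlacing d mu ->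
  wpoly e = ('X - a%:P) * wpoly d -> wsum e = wsum d -> poles e = a :: poles d ->
  interlacing e (a :: mu).
Proof.
move=> d0 [szmu dmu cnt] ed we pe; split.
- by rewrite -(size_map fst) -/(poles e) pe /= size_map szmu prednK.
- by rewrite ed dmu we big_cons scalerAr.
- move=> t; have [ge_cnt gt_cnt] := cnt t.
  by rewrite pe /count_ge /count_gt /= leq_add2l -addnS leq_add2l.
Qed.

Lemma interlacing_cons_weight0 x d mu : (0 < size d)%N -> x.2 = 0 ->
  interlacing d mu -> interlacing (x :: d) (x.1 :: mu).
Proof.
move=> d0 x0 dmu; apply: interlacing_cons dmu _ _ _ => //.
- by rewrite wpoly_cons x0 scale0r addr0.
- by rewrite /wsum big_cons x0 add0r.
Qed.

Lemma interlacing_cons_merge a v v' d mu : interlacing ((a, v + v') :: d) mu ->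
  interlacing [:: (a, v), (a, v') & d] (a :: mu).
Proof.
move=> dmu; apply: interlacing_cons dmu _ _ _ => //.
- rewrite !wpoly_cons /poles /= big_cons -!mul_polyC.
  by set P := \prod_(_ <- _) _; rewrite /=; ring.
- by rewrite /wsum !big_cons addrA.
Qed.

Lemma interlacing_exists d : (forall x, x \in d -> 0 <= x.2) -> 0 < wsum d ->
  exists mu, interlacing d mu.
Proof.
have [n] := ubnP (size d); elim: n d => // n IH d.
rewrite ltnS => dn dw0 wd0.
have [/hasP[x xd /eqP x0]|/hasPn dw] := boolP (has (fun x => x.2 == 0) d).
  have dx : perm_eq (x :: rem x d) d by rewrite perm_sym perm_to_rem.
  have wdx : wsum (rem x d) = wsum d.
    by rewrite -(wsum_perm dx) /wsum big_cons x0 add0r.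
  have [|||mu dmu] := IH (rem x d).
  - by rewrite -(perm_size dx) in dn.
  - by move=> y /mem_rem; apply: dw0.
  - by rewrite wdx.
  exists (x.1 :: mu); apply: interlacing_perm dx (interlacing_cons_weight0 _ x0 dmu).
  by case: (rem x d) wdx wd0 => // <-; rewrite /wsum big_nil ltxx.
have [ud|] := boolP (uniq (poles d)).
  apply: interlacing_exists_uniq => //.
    by case: (d) wd0 => [|//]; rewrite /wsum big_nil ltxx.
  by move=> x xd; rewrite lt_def dw0 ?andbT // (dw x xd).
case/perm_eq_map_dup => -[a v] [[a' v'] [r [dr /= aa']]]; rewrite -aa' in dr.
have [|||mu dmu] := IH ((a, v + v') :: r).
- by rewrite (perm_size dr) in dn.
- move=> x; rewrite inE => /orP[/eqP -> /=|xr].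
    by apply: addr_ge0; [apply: (dw0 (a, v)) | apply: (dw0 (a, v'))];
      rewrite (perm_mem dr) !inE eqxx ?orbT.
  by apply: dw0; rewrite (perm_mem dr) !inE xr !orbT.
- by rewrite (wsum_perm dr) /wsum !big_cons addrA in wd0; rewrite /wsum big_cons.
exists (a :: mu); rewrite perm_sym in dr.
exact: interlacing_perm dr (interlacing_cons_merge dmu).
Qed.

Lemma interlacing_sum_roots d mu : 0 < wsum d -> interlacing d mu -> (2 <= size d)%N ->
  \sum_(z <- mu) z = \sum_(z <- poles d) z - (\sum_(x <- d) x.2 * x.1) / wsum d.
Proof.
move=> wd0 [szmu dmu _] d2; have := wpoly_subtop_coef d2; rewrite {1}dmu coefZ.
have -> : (size d).-2 = (size mu).-1 by rewrite szmu.
rewrite coefPn_prod_XsubC; last by rewrite szmu; case: (size d) d2 => [|[]].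
move=> E; apply: (mulfI (lt0r_neq0 wd0)); rewrite mulrBr mulrCA divff ?lt0r_neq0 // mulr1.
by apply: oppr_inj; rewrite -mulrN E opprB.
Qed.

Lemma ltn_count_sorted (P : pred R) s i : (forall x y, x <= y -> P x -> P y) ->
  sorted >=%R s -> (i < size s)%N -> P (nth 0 s i) -> (i < count P s)%N.
Proof.
move=> Pup; elim: s i => [//|x s IH] [|i] /[dup] xs /= /path_sorted ss; first by move=> _ ->.
rewrite ltnS => si Psi; rewrite -add1n leq_add ?IH //.
have /allP/(_ _ (mem_nth 0 si)) := order_path_min ge_trans xs.
by move/Pup/(_ Psi) => ->.
Qed.

Lemma leq_count_sorted (P : pred R) s i : (forall x y, x <= y -> P x -> P y) ->
  sorted >=%R s -> ~~ P (nth 0 s i) -> (count P s <= i)%N.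
Proof.
move=> Pup; elim: s i => [//|x s IH] [|i] /[dup] xs /= /path_sorted ss nPsi.
  rewrite (negbTE nPsi) leqn0 eqn0Ngt -has_count; apply/hasPn => y ys.
  apply: contra nPsi; apply: Pup.
  by have /allP := order_path_min ge_trans xs; apply.
by rewrite -add1n leq_add ?leq_b1 ?IH.
Qed.

Lemma sorted_interlacing_nth (ls mu : seq R) : size mu = (size ls).-1 ->
  (forall t, (count_ge t mu <= count_ge t ls)%N /\ (count_gt t ls <= (count_gt t mu).+1)%N) ->
  sorted >=%R ls -> sorted >=%R mu ->
  forall k, (k < size mu)%N -> nth 0 ls k.+1 <= nth 0 mu k <= nth 0 ls k.
Proof.
move=> szmu cnt sls smu k kmu; set t := nth 0 mu k.
have kls : (k.+1 < size ls)%N by move: kmu; rewrite szmu -ltn_predRL.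
have gt_up x y : x <= y -> t < x -> t < y by move=> xy /lt_le_trans; apply.
have ge_up x y : x <= y -> t <= x -> t <= y by move=> xy /le_trans; apply.
have [ge_cnt gt_cnt] := cnt t; apply/andP; split; rewrite leNgt; apply/negP => lt_t.
  have := @ltn_count_sorted (fun x => t < x) _ _ gt_up sls kls lt_t.
  have := @leq_count_sorted (fun x => t < x) _ k gt_up smu; rewrite ltxx => /(_ isT).
  by rewrite -!/(count_gt _ _); lia.
have := @ltn_count_sorted (fun x => t <= x) _ _ ge_up smu kmu (lexx t).
have := @leq_count_sorted (fun x => t <= x) _ k ge_up sls; rewrite -ltNge => /(_ lt_t).
by rewrite -!/(count_ge _ _); lia.
Qed.

Lemma ler_div_sub_pole w x y t : 0 <= w -> x <= y -> (y < t) || (t < x) ->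
  w / (t - x) <= w / (t - y).
Proof.
move=> w0 xy /orP[yt|tx]; apply: ler_wpM2l => //.
  by rewrite lef_pV2 ?posrE ?subr_gt0 ?(le_lt_trans xy) // lerD2l lerN2.
by rewrite lef_nV2 ?negrE ?subr_lt0 ?(lt_le_trans tx) // lerD2l lerN2.
Qed.

Lemma sorted_root_le d e mu nu i j a b :
  0 < wsum d -> 0 < wsum e -> interlacing d mu -> interlacing e nu ->
  sorted >=%R mu -> sorted >=%R nu -> (i < size mu)%N ->
  a <= nth 0 nu j -> nth 0 mu i <= b ->
  (forall t, a < t < b -> [/\ t \notin poles d, t \notin poles e, wfrac d t <= wfrac e t
     & (count_gt t (poles d) + j <= count_gt t (poles e) + i)%N]) ->
  nth 0 mu i <= nth 0 nu j.
Proof.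
move=> wd0 we0 dmu enu smu snu imu anu mub gap; rewrite leNgt; apply/negP => numu.
have [lt_nu lt_mu] := midf_lt numu; set t := (_ + _) / 2 in lt_nu lt_mu.
have [|td te de cnt] := gap t; first by rewrite (le_lt_trans anu) ?(lt_le_trans lt_mu).
have gt_up x y : x <= y -> t < x -> t < y by move=> xy /lt_le_trans; apply.
have := wfrac_le_count_gt wd0 we0 dmu enu td te de.
have := @ltn_count_sorted (fun x => t < x) _ _ gt_up smu imu lt_mu.
have := @leq_count_sorted (fun x => t < x) _ j gt_up snu; rewrite -leNgt ltW // => /(_ isT).
by rewrite -!/(count_gt _ _); lia.
Qed.

Lemma wpoly_map (lam v : nat -> R) (s : seq nat) : uniq s ->
  wpoly [seq (lam i, v i) | i <- s] =
  \sum_(i <- s) v i *: \prod_(j <- s | j != i) ('X - (lam j)%:P).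
Proof.
elim: s => [|x s IH] /=; first by rewrite big_nil.
case/andP=> xs us; rewrite IH // big_cons big_cons eqxx /= addrC mulr_sumr; congr (_ + _).
  rewrite /poles -map_comp big_map; congr (_ *: _).
  rewrite [RHS]big_mkcond; apply: eq_big_seq => j js /=.
  by rewrite ifT //; apply: contraNneq xs => <-.
apply: eq_big_seq => i si; rewrite big_cons -scalerAr; congr (_ *: _).
by rewrite ifT //; apply: contraNneq xs => ->.
Qed.

Definition wblock (lam v : nat -> R) b m := [seq (lam i, v i) | i <- iota b m].

Lemma wpoly_wblock_interlace_poly lam w n :
  wpoly (wblock lam w 1 n) = interlace_poly n lam w.
Proof. by rewrite wpoly_map ?iota_uniq // /interlace_poly /index_iota subn1. Qed.

Lemma poles_wblock lam v b m : poles (wblock lam v b m) = map lam (iota b m).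
Proof. by rewrite /poles -map_comp. Qed.

Lemma wsum_wblock lam v b m : wsum (wblock lam v b m) = \sum_(b <= i < b + m) v i.
Proof. by rewrite /wsum big_map /index_iota addKn. Qed.

Lemma wfrac_wblock lam v b m t :
  wfrac (wblock lam v b m) t = \sum_(b <= i < b + m) v i / (t - lam i).
Proof. by rewrite /wfrac big_map /index_iota addKn. Qed.

Lemma wblock_sum_roots lam v b m mu :
  0 < \sum_(b <= i < b + m) v i -> interlacing (wblock lam v b m) mu -> (2 <= m)%N ->
  \sum_(z <- mu) z = \sum_(b <= i < b + m) lam i
                     - (\sum_(b <= i < b + m) v i * lam i) / \sum_(b <= i < b + m) v i.
Proof.
move=> vsum dmu m2; rewrite (interlacing_sum_roots _ dmu) ?size_map ?size_iota ?wsum_wblock //.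
by rewrite poles_wblock /wblock !big_map /index_iota addKn.
Qed.

Section Block.
Variables (lam v : nat -> R) (b m : nat).
Hypothesis lam_noninc :
  forall i j, (b <= i)%N -> (i <= j)%N -> (j < b + m)%N -> lam j <= lam i.

Lemma sorted_poles_wblock : sorted >=%R (poles (wblock lam v b m)).
Proof.
rewrite poles_wblock sorted_map.
apply: (sub_in_sorted (P := mem (iota b m)) _ _ (iota_ltn_sorted b m)); last exact/allP.
by move=> i j; rewrite !mem_iota => /andP[bi _] /andP[_ jm] /ltnW ij; exact: lam_noninc.
Qed.

Lemma count_gt_wblock_gap c t : (b <= c)%N -> (c.+1 < b + m)%N -> lam c.+1 < t < lam c ->
  count_gt t (poles (wblock lam v b m)) = (c.+1 - b)%N /\ t \notin poles (wblock lam v b m).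
Proof.
move=> bc cm /andP[lt_t t_lt]; rewrite poles_wblock.
have t_lt_lam i : (b <= i < b + m)%N -> (t < lam i) = (i <= c)%N.
  case/andP=> bi im; have [ic|ci] := leqP i c.
    by apply: lt_le_trans t_lt _; apply: lam_noninc; rewrite // (ltn_trans _ cm).
  by apply/negbTE; rewrite -leNgt ltW // (le_lt_trans _ lt_t) // lam_noninc // (leq_trans bc).
split.
  rewrite /count_gt count_map; apply: count_iota_prefix => [|i /t_lt_lam /= ->]; first by lia.
  by rewrite subnKC ?ltnS // (leq_trans bc).
apply/mapP => -[i]; rewrite mem_iota => /[dup] /t_lt_lam ti /andP[bi im] tE.
have [ic|ci] := leqP i c; first by rewrite -tE ltxx ic in ti.
have := lam_noninc (leq_trans bc (leqnSn c)) ci im.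
by rewrite -tE => /le_lt_trans/(_ lt_t); rewrite ltxx.
Qed.

Lemma wblock_sorted_roots : (forall i, (b <= i < b + m)%N -> 0 <= v i) ->
  0 < \sum_(b <= i < b + m) v i ->
  exists mu, [/\ sorted >=%R mu, interlacing (wblock lam v b m) mu &
    forall k, (k < m.-1)%N -> lam (b + k).+1 <= nth 0 mu k <= lam (b + k)].
Proof.
move=> v_ge0 vsum.
have [||mu0 dmu0] := @interlacing_exists (wblock lam v b m).
- by move=> x /mapP[i]; rewrite mem_iota => bi ->; exact: v_ge0.
- by rewrite wsum_wblock.
have dmu : interlacing (wblock lam v b m) (sort >=%R mu0).
  by apply: interlacing_perm_roots dmu0; rewrite perm_sym perm_sort.
have smu : sorted >=%R (sort >=%R mu0) by apply: sort_sorted; exact: ge_total.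
exists (sort >=%R mu0); split => //.
move=> k km; have [szmu _ cnt] := dmu.
have szl : size (sort >=%R mu0) = (size (poles (wblock lam v b m))).-1 by rewrite size_map.
have := sorted_interlacing_nth szl cnt sorted_poles_wblock smu (k := k).
rewrite szmu size_map size_iota poles_wblock => /(_ km).
have km1 : (k.+1 < m)%N by rewrite -ltn_predRL.
by rewrite !(nth_map 0) ?nth_iota ?size_iota ?addnS // ltnW.
Qed.

End Block.

End WeightedPoles.

Section RootSumBounds.
Variables (R : rcfType) (lam w : nat -> R) (n : nat).
Hypothesis lam_noninc :
  forall i j, (1 <= i)%N -> (i <= j)%N -> (j <= n)%N -> lam j <= lam i.
Hypothesis w_ge0 : forall i, (1 <= i)%N -> (i <= n)%N -> 0 <= w i.
Hypothesis w_pos : 0 < \sum_(1 <= i < n.+1) w i.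
Variable mu : seq R.
Hypotheses (mu_sorted : sorted >=%R mu) (mu_roots : interlacing (wblock lam w 1 n) mu).
Hypothesis mu_gap : forall k, (k < n.-1)%N -> lam (1 + k).+1 <= nth 0 mu k <= lam (1 + k).
Variables l r : nat.
Hypotheses (l_gt0 : (0 < l)%N) (lr : (l <= r)%N) (rn : (r < n)%N).

Definition upper_weight i := if i == r.+1 then \sum_(r.+1 <= j < n.+1) w j else w i.
Definition lower_weight i := if i == l then \sum_(1 <= j < l.+1) w j else w i.

Lemma big_upper_weight (F : nat -> R -> R) :
  \sum_(l <= i < r.+2) F i (upper_weight i) =
  \sum_(l <= i < r.+1) F i (w i) + F r.+1 (\sum_(r.+1 <= j < n.+1) w j).
Proof.
rewrite big_nat_recr ?(leqW lr) // [upper_weight r.+1]/upper_weight eqxx; congr (_ + _).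
by apply: eq_big_nat => i /andP[_ ir]; rewrite [upper_weight i]/upper_weight ltn_eqF.
Qed.

Lemma big_lower_weight (F : nat -> R -> R) :
  \sum_(l <= i < r.+2) F i (lower_weight i) =
  F l (\sum_(1 <= j < l.+1) w j) + \sum_(l.+1 <= i < r.+2) F i (w i).
Proof.
rewrite big_ltn ?ltnS ?(leqW lr) // [lower_weight l]/lower_weight eqxx; congr (_ + _).
by apply: eq_big_nat => i /andP[li _]; rewrite [lower_weight i]/lower_weight gtn_eqF.
Qed.

Let block_size : (l + (r.+2 - l) = r.+2)%N. Proof. lia. Qed.

Let lam_noninc_block i j :
  (l <= i)%N -> (i <= j)%N -> (j < l + (r.+2 - l))%N -> lam j <= lam i.
Proof. by rewrite block_size => li ij jr; apply: lam_noninc => //; lia. Qed.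

Let full_gap c t : (l <= c <= r)%N -> lam c.+1 < t < lam c ->
  count_gt t (poles (wblock lam w 1 n)) = c /\ t \notin poles (wblock lam w 1 n).
Proof.
move=> /andP[lc cr] tc.
have noninc i j : (1 <= i)%N -> (i <= j)%N -> (j < 1 + n)%N -> lam j <= lam i.
  by move=> *; apply: lam_noninc => //; lia.
by have := @count_gt_wblock_gap R lam w 1 n noninc c t; rewrite subn1; apply => //; lia.
Qed.

Let block_gap v c t : (l <= c <= r)%N -> lam c.+1 < t < lam c ->
  count_gt t (poles (wblock lam v l (r.+2 - l))) = (c.+1 - l)%N /\
  t \notin poles (wblock lam v l (r.+2 - l)).
Proof.
move=> /andP[lc cr] tc; apply: (count_gt_wblock_gap v lam_noninc_block) => //.
by rewrite block_size; lia.
Qed.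

Lemma wfrac_le_upper c t : (l <= c <= r)%N -> lam c.+1 < t < lam c ->
  wfrac (wblock lam w 1 n) t <= wfrac (wblock lam upper_weight l (r.+2 - l)) t.
Proof.
move=> /andP[lc cr] /andP[lt_t t_lt].
rewrite !wfrac_wblock block_size (big_upper_weight (fun i x => x / (t - lam i))) add1n.
rewrite (big_cat_nat _ (m := 1) (n := l) (p := n.+1)) //=; last lia.
rewrite (big_cat_nat _ (m := l) (n := r.+1) (p := n.+1)) //=; try lia.
rewrite -[X in _ <= X]add0r; apply: lerD; last apply: lerD => //.
  rewrite big_nat_cond; apply: sumr_le0 => i /andP[/andP[i1 il] _].
  apply: mulr_ge0_le0; first by apply: w_ge0; lia.
  by rewrite invr_le0 subr_le0 ltW // (lt_le_trans t_lt) // lam_noninc //; lia.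
rewrite mulr_suml; apply: ler_sum_nat => i /andP[ri i_n].
apply: ler_div_sub_pole; rewrite ?w_ge0 ?lam_noninc //; try lia.
by rewrite (le_lt_trans _ lt_t) // lam_noninc //; lia.
Qed.

Lemma wfrac_le_lower c t : (l <= c <= r)%N -> lam c.+1 < t < lam c ->
  wfrac (wblock lam lower_weight l (r.+2 - l)) t <= wfrac (wblock lam w 1 n) t.
Proof.
move=> /andP[lc cr] /andP[lt_t t_lt].
rewrite !wfrac_wblock block_size (big_lower_weight (fun i x => x / (t - lam i))) add1n.
rewrite (big_cat_nat _ (m := 1) (n := l.+1) (p := n.+1)) //=; last lia.
rewrite (big_cat_nat _ (m := l.+1) (n := r.+2) (p := n.+1)) //=; try lia.
rewrite -[X in X <= _]addr0 -addrA; apply: lerD; last apply: lerD => //.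
  rewrite mulr_suml; apply: ler_sum_nat => i /andP[i1 il].
  apply: ler_div_sub_pole; rewrite ?w_ge0 ?lam_noninc //; try lia.
  by rewrite (lt_le_trans t_lt) ?orbT // lam_noninc //; lia.
rewrite big_nat_cond; apply: sumr_ge0 => i /andP[/andP[ri i_n] _].
apply: mulr_ge0; first by apply: w_ge0; lia.
by rewrite invr_ge0 subr_ge0 ltW // (le_lt_trans _ lt_t) // lam_noninc //; lia.
Qed.

Let wsum_full : 0 < wsum (wblock lam w 1 n).
Proof. by rewrite wsum_wblock add1n. Qed.

Lemma sum_roots_le_upper : 0 < \sum_(l <= i < n.+1) w i ->
  \sum_(l <= j < r.+1) nth 0 mu j.-1 <=
  \sum_(l <= j < r.+1) lam j
  - \sum_(l <= j < r.+1) w j / (\sum_(l <= i < n.+1) w i) * (lam j - lam r.+1).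
Proof.
set U := \sum_(l <= i < n.+1) w i; set W := \sum_(r.+1 <= i < n.+1) w i => U0.
have UW : U = \sum_(l <= i < r.+1) w i + W.
  by rewrite /U (big_cat_nat _ (m := l) (n := r.+1) (p := n.+1)) //; lia.
have vsum : \sum_(l <= i < l + (r.+2 - l)) upper_weight i = U.
  by rewrite block_size (big_upper_weight (fun _ x => x)) UW.
have v_ge0 i : (l <= i < l + (r.+2 - l))%N -> 0 <= upper_weight i.
  rewrite block_size /upper_weight => /andP[li ir]; case: eqP => _; last by apply: w_ge0; lia.
  by rewrite big_nat_cond sumr_ge0 // => j /andP[/andP[rj jn] _]; apply: w_ge0; lia.
have [|nu [snu enu nu_gap]] := wblock_sorted_roots lam_noninc_block v_ge0.
  by rewrite vsum.
have szn : size nu = (r.+1 - l)%N by case: enu => -> _ _; rewrite size_map size_iota; lia.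
have mu_nu k : (k < r.+1 - l)%N -> nth 0 mu (l + k).-1 <= nth 0 nu k.
  move=> kr; have lkr : (l <= l + k <= r)%N by lia.
  apply: (sorted_root_le (a := lam (l + k).+1) (b := lam (l + k)) wsum_full _ mu_roots enu
    mu_sorted snu).
  - by rewrite wsum_wblock vsum.
  - by have [szmu _ _] := mu_roots; rewrite szmu size_map size_iota; lia.
  - have kn : (k < (r.+2 - l).-1)%N by lia.
    by have /andP[] := nu_gap k kn.
  - have kn : ((l + k).-1 < n.-1)%N by lia.
    by have /andP[_] := mu_gap kn; rewrite add1n prednK // addn_gt0 l_gt0.
  move=> t tc; have [cd td] := full_gap lkr tc; have [ce te] := block_gap upper_weight lkr tc.
  by split => //; [exact: wfrac_le_upper tc | rewrite cd ce; lia].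
have sum_nu : \sum_(z <- nu) z = \sum_(l <= j < r.+1) lam j
    - \sum_(l <= j < r.+1) w j / U * (lam j - lam r.+1).
  rewrite (wblock_sum_roots _ enu) ?vsum //; last by lia.
  rewrite block_size (big_upper_weight (fun i x => x * lam i)).
  rewrite [\sum_(l <= i < r.+2) lam i]big_nat_recr ?(leqW lr) //= -/W.
  have -> : \sum_(l <= j < r.+1) w j / U * (lam j - lam r.+1) =
      (\sum_(l <= j < r.+1) w j * lam j - (\sum_(l <= j < r.+1) w j) * lam r.+1) / U.
    by rewrite mulr_suml -sumrB mulr_suml; apply: eq_bigr => j _; ring.
  by move: (lt0r_neq0 U0); rewrite UW => U0'; field.
rewrite -sum_nu -{1}(add0n l) big_addn [\sum_(z <- nu) z](big_nth 0) szn !big_mkord.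
by apply: ler_sum => k _; rewrite addnC; exact: mu_nu.
Qed.

Lemma sum_roots_ge_lower : 0 < \sum_(1 <= i < r.+2) w i ->
  \sum_(l <= j < r.+1) lam j.+1
  + \sum_(l <= j < r.+1) w j.+1 / (\sum_(1 <= i < r.+2) w i) * (lam l - lam j.+1)
  <= \sum_(l <= j < r.+1) nth 0 mu j.-1.
Proof.
set L := \sum_(1 <= i < r.+2) w i; set L' := \sum_(1 <= i < l.+1) w i => L0.
have LL : L = L' + \sum_(l.+1 <= i < r.+2) w i.
  by rewrite /L (big_cat_nat _ (m := 1) (n := l.+1) (p := r.+2)) //; lia.
have vsum : \sum_(l <= i < l + (r.+2 - l)) lower_weight i = L.
  by rewrite block_size (big_lower_weight (fun _ x => x)) LL.
have v_ge0 i : (l <= i < l + (r.+2 - l))%N -> 0 <= lower_weight i.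
  rewrite block_size /lower_weight => /andP[li ir]; case: eqP => _; last by apply: w_ge0; lia.
  by rewrite big_nat_cond sumr_ge0 // => j /andP[/andP[j1 jl] _]; apply: w_ge0; lia.
have [|nu [snu enu nu_gap]] := wblock_sorted_roots lam_noninc_block v_ge0.
  by rewrite vsum.
have szn : size nu = (r.+1 - l)%N by case: enu => -> _ _; rewrite size_map size_iota; lia.
have nu_mu k : (k < r.+1 - l)%N -> nth 0 nu k <= nth 0 mu (l + k).-1.
  move=> kr; have lkr : (l <= l + k <= r)%N by lia.
  apply: (sorted_root_le (a := lam (l + k).+1) (b := lam (l + k)) _ wsum_full enu mu_roots
    snu mu_sorted).
  - by rewrite wsum_wblock vsum.
  - by rewrite szn.
  - have kn : ((l + k).-1 < n.-1)%N by lia.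
    by have /andP[] := mu_gap kn; rewrite add1n prednK // addn_gt0 l_gt0.
  - have kn : (k < (r.+2 - l).-1)%N by lia.
    by have /andP[_] := nu_gap k kn.
  move=> t tc; have [cd td] := full_gap lkr tc; have [ce te] := block_gap lower_weight lkr tc.
  by split => //; [exact: wfrac_le_lower tc | rewrite cd ce; lia].
have sum_nu : \sum_(z <- nu) z = \sum_(l <= j < r.+1) lam j.+1
    + \sum_(l <= j < r.+1) w j.+1 / L * (lam l - lam j.+1).
  rewrite (wblock_sum_roots _ enu) ?vsum //; last by lia.
  rewrite block_size (big_lower_weight (fun i x => x * lam i)) -/L'.
  rewrite [\sum_(l <= i < r.+2) lam i]big_ltn ?ltnS ?(leqW lr) //= !big_add1 /=.
  have -> : \sum_(l <= j < r.+1) w j.+1 / L * (lam l - lam j.+1) =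
      ((\sum_(l <= j < r.+1) w j.+1) * lam l - \sum_(l <= j < r.+1) w j.+1 * lam j.+1) / L.
    by rewrite mulr_suml -sumrB mulr_suml; apply: eq_bigr => j _; ring.
  by move: (lt0r_neq0 L0); rewrite LL big_add1 /= => L0'; field.
rewrite -sum_nu -{1}(add0n l) big_addn [\sum_(z <- nu) z](big_nth 0) szn !big_mkord.
by apply: ler_sum => k _; rewrite addnC; exact: nu_mu.
Qed.

End RootSumBounds.

Theorem theorem2p2 (R : realType) (n : nat) (lam w : nat -> R) :
  (2 <= n)%N ->
  (forall i j : nat, (1 <= i)%N -> (i <= j)%N -> (j <= n)%N -> lam j <= lam i) ->
  (forall i : nat, (1 <= i)%N -> (i <= n)%N -> 0 <= w i) ->
  \sum_(1 <= i < n.+1) w i = 1 ->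
  exists mu : nat -> R,
    (forall i j : nat, (1 <= i)%N -> (i <= j)%N -> (j <= n.-1)%N -> mu j <= mu i) /\
    interlace_poly n lam w = \prod_(1 <= j < n) ('X - (mu j)%:P) /\
    (forall l r : nat, (1 <= l)%N -> (l <= r)%N -> (r <= n.-1)%N ->
       \sum_(l <= i < n.+1) w i != 0 ->
       \sum_(1 <= i < r.+2) w i != 0 ->
       \sum_(l <= j < r.+1) lam j.+1
         + \sum_(l <= j < r.+1) w j.+1 / (\sum_(1 <= i < r.+2) w i) * (lam l - lam j.+1)
       <= \sum_(l <= j < r.+1) mu j
       /\
       \sum_(l <= j < r.+1) mu j
       <= \sum_(l <= j < r.+1) lam j
         - \sum_(l <= j < r.+1) w j / (\sum_(l <= i < n.+1) w i) * (lam j - lam r.+1)).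
Proof.
move=> n2 lam_noninc w_ge0 w1.
have w_pos : 0 < \sum_(1 <= i < n.+1) w i by rewrite w1 ltr01.
have sum_w_gt0 a b : (1 <= a)%N -> (b <= n.+1)%N -> \sum_(a <= i < b) w i != 0 ->
    0 < \sum_(a <= i < b) w i.
  move=> a1 bn; rewrite lt_def => ->; rewrite big_nat_cond sumr_ge0 // => i.
  by move=> /andP[/andP[ai ib] _]; apply: w_ge0; lia.
have [||mu [smu dmu mu_gap]] := @wblock_sorted_roots _ lam w 1 n _ _ w_pos.
- by move=> i j i1 ij; rewrite add1n ltnS; exact: lam_noninc.
- by move=> i /andP[i1 i_n]; apply: w_ge0; lia.
have [szmu wmu _] := dmu; rewrite size_map size_iota in szmu.
exists (fun j => nth 0 mu j.-1); split; [|split].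
- move=> i j i1 ij jn; apply: (sorted_leq_nth ge_trans lexx 0 smu); rewrite ?inE ?szmu; lia.
- rewrite -wpoly_wblock_interlace_poly wmu wsum_wblock add1n w1 scale1r.
  by rewrite (big_nth 0) szmu big_add1.
move=> l r l1 lr rn U0 L0; split.
  by apply: (sum_roots_ge_lower (n := n)) => //; [lia | apply: sum_w_gt0 => //; lia].
by apply: (sum_roots_le_upper (n := n)) => //; [lia | apply: sum_w_gt0 => //; lia].
Qed.
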